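(* Let $n\geq 1$ and $0\leq p\leq 1$. Let $\Pr_p(C)$ denote the probability, under the bias-$p$ measure, that a Boolean function on $n$ variables is canalizing. Then $$\Pr_p(C) = (-1)^n\bigl(p^{2^n}+(1-p)^{2^n}\bigr) - 2n\,p^{2^{n-1}}(1-p)^{2^{n-1}} + \sum_{k=1}^n (-1)^{k+1}\binom{n}{k}2^k\bigl(p^{2^n-2^{n-k}}+(1-p)^{2^n-2^{n-k}}\bigr).$$
   Context: A Boolean function on $n$ variables is a function $f:\{0,1\}^n\to\{0,1\}$; write $[n]=\{0,1,\dots,n-1\}$ for the index set of the variables. For $0\leq p\leq 1$, the bias-$p$ probability measure on the (finite) set of all Boolean functions on $n$ variables is $\Pr_p(f)=p^{|f^{-1}\{1\}|}(1-p)^{|f^{-1}\{0\}|}$ (with $0^0=1$). A Boolean function $f$ is canalizing if there exist $i\in[n]$ and $s,v\in\{0,1\}$ such that for all $x\in\{0,1\}^n$, $x_i=s$ implies $f(x)=v$. $C$ denotes the set of canalizing Boolean functions on $n$ variables. *)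

From mathcomp Require Import all_boot all_order all_algebra.
Set Implicit Arguments. Unset Strict Implicit. Unset Printing Implicit Defensive.
Import Order.TTheory GRing.Theory Num.Theory.
Local Open Scope ring_scope.

Definition input (n : nat) := {ffun 'I_n -> bool}.
Definition boolfun (n : nat) := {ffun input n -> bool}.

Definition canalizing (n : nat) (f : boolfun n) : bool :=
  [exists i : 'I_n, exists s : bool, exists v : bool,
     [forall x : input n, (x i == s) ==> (f x == v)]].

(* Bias-p probability of a single Boolean function (0^0 = 1 via ^+). *)
Definition prp (R : nzRingType) (n : nat) (p : R) (f : boolfun n) : R :=
  p ^+ #|[set x | f x]| * (1 - p) ^+ #|[set x | ~~ f x]|.

Definition Pr_canal (R : nzRingType) (n : nat) (p : R) : R :=
  \sum_(f : boolfun n | canalizing f) prp p f.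

From mathcomp Require Import all_boot all_order all_algebra.
From mathcomp Require Import ring.
Set Implicit Arguments.
Unset Strict Implicit.
Unset Printing Implicit Defensive.
Import Order.TTheory GRing.Theory Num.Theory.
Local Open Scope ring_scope.

(* A function f canalizes to v iff it is constant v on some face {x_i = s} of
   the cube. Unless f is constant, no coordinate gives two such faces for the
   same v, so 1 - \prod_i (1 - [f = v on x_i = 0] - [f = v on x_i = 1]) is the
   indicator that f canalizes to v; f canalizes to both values iff it is a
   literal x_i or ~ x_i, and the two constant functions are corrected for
   separately. Expanding the product, each of the C(n, k) 2^k partial
   assignments r fixing k coordinates contributes (-1)^k times the indicator
   that f is constant v on the union of the k faces prescribed by r. That union
   has 2^n - 2^(n-k) points, and as the values of f are independent under the
   bias-p measure, its probability is p or 1 - p raised to that power. *)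

Lemma card_ffun_forall (I T : finType) (Q : I -> {pred T}) :
  #|[pred x : {ffun I -> T} | [forall i, x i \in Q i]]| = (\prod_i #|Q i|)%N.
Proof.
rewrite -(@eq_card _ (family Q)) ?card_family; last first.
  by move=> x; rewrite !inE; apply/familyP/forallP.
by rewrite foldrE big_map big_enum.
Qed.

Lemma sum_option (V : nmodType) (T : finType) (F : option T -> V) :
  \sum_o F o = F None + \sum_t F (Some t).
Proof.
rewrite (bigD1 None) //= (reindex_omap Some id) => [|[t|] //].
by congr (_ + _); apply: eq_bigl => t; rewrite eqxx.
Qed.

Lemma prodr_natb (R : comNzSemiRingType) (I : finType) (P : pred I) :
  \prod_i ((P i)%:R : R) = [forall i, P i]%:R.
Proof.
case: (boolP [forall i, P i]) => [/forallP P_all | /forallPn [i /negbTE Pi]].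
  by rewrite big1 // => i _; rewrite P_all.
by rewrite (bigD1 i) //= Pi mul0r.
Qed.

Lemma sum_eq_inj (R : nzSemiRingType) (I : finType) (T : eqType) (g : I -> T) :
  injective g -> forall t, \sum_i ((t == g i)%:R : R) = (t \in codom g)%:R.
Proof.
move=> g_inj t; case: (boolP (t \in codom g)) => [/codomP [i ->] | tNg].
  rewrite (bigD1 i) //= eqxx big1 ?addr0 // => j ji.
  by rewrite (inj_eq g_inj) eq_sym (negbTE ji).
by apply: big1 => i _; case: eqP => // ti; rewrite ti codom_f in tNg.
Qed.

Lemma prod_one_sub_indicators (R : comNzRingType) (I : finType) (a b : pred I) :
  (forall i, ~~ (a i && b i)) ->
  \prod_i (1 - (a i)%:R - (b i)%:R : R) = (~~ [exists i, a i || b i])%:R.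
Proof.
move=> ab_disj; rewrite negb_exists -prodr_natb; apply: eq_bigr => i _.
by move: (ab_disj i); case: (a i); case: (b i) => //= _; rewrite ?subr0 ?subrr.
Qed.

Section Faces.

Variable n : nat.

Lemma card_face (i : 'I_n) (s : bool) :
  #|[pred x : input n | x i == s]| = (2 ^ n.-1)%N.
Proof.
rewrite -(@eq_card _ [pred x : input n | [forall j, (j != i) || (x j == s)]]); last first.
  move=> x; rewrite !inE; apply/forallP/idP => [/(_ i)|/eqP xi j]; first by rewrite eqxx.
  by case: eqVneq => [->|] //=; rewrite xi.
have <- : #|predC1 i| = n.-1 by rewrite cardC1 card_ord.
rewrite (@card_ffun_forall _ _ (fun j => [pred b | (j != i) || (b == s)])).
rewrite -prod_nat_const [RHS]big_mkcond /=.
by apply: eq_bigr => j _; rewrite !inE; case: eqP => _; rewrite ?card_bool ?card1.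
Qed.

Definition support (r : {ffun 'I_n -> option bool}) : {set 'I_n} :=
  [set i | r i != None].

Definition faces (r : {ffun 'I_n -> option bool}) : pred (input n) :=
  [pred x : input n | [exists i, r i == Some (x i)]].

Lemma card_support_eq (S : {set 'I_n}) :
  #|[pred r | support r == S]| = (2 ^ #|S|)%N.
Proof.
rewrite -(@eq_card _ [pred r : {ffun 'I_n -> option bool} |
                       [forall i, (r i != None) == (i \in S)]]); last first.
  move=> r; rewrite !inE; apply/forallP/eqP => [rS|<- i]; last by rewrite inE.
  by apply/setP => i; rewrite inE; exact: (eqP (rS i)).
rewrite (@card_ffun_forall _ _ (fun i => [pred o : option bool | (o != None) == (i \in S)])).
rewrite -prod_nat_const [RHS]big_mkcond /=; apply: eq_bigr => i _.
case: (i \in S).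
- have := cardC1 (None : option bool); rewrite card_option card_bool /= => <-.
  by apply: eq_card => o; rewrite !inE eqb_id.
- by rewrite -(card1 (None : option bool)); apply: eq_card => o; rewrite !inE eqbF_neg negbK.
Qed.

Lemma card_faces r : #|faces r| = (2 ^ n - 2 ^ (n - #|support r|))%N.
Proof.
have card_outside : #|[predC faces r]| = (2 ^ (n - #|support r|))%N.
  rewrite -(@eq_card _ [pred x : input n | [forall i, r i != Some (x i)]]); last first.
    by move=> x; rewrite !inE negb_exists.
  rewrite (@card_ffun_forall _ _ (fun i => [pred b | r i != Some b])).
  have <- : #|[pred i | r i == None]| = (n - #|support r|)%N.
    rewrite -[X in (X - _)%N](card_ord n) -(cardC (support r)) addKn.
    by apply: eq_card => i; rewrite !inE negbK.
  rewrite -prod_nat_const [RHS]big_mkcond /=; apply: eq_bigr => i _.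
  rewrite inE; case: (r i) => [b|] /=.
  - have := cardC1 b; rewrite card_bool /= => <-.
    by apply: eq_card => c; rewrite !inE eq_sym.
  - by rewrite -card_bool; apply: eq_card => c; rewrite !inE.
have := cardC (faces r); rewrite card_ffun card_bool card_ord => <-.
by rewrite card_outside addnK.
Qed.

Lemma sum_by_support (V : nmodType) (F : nat -> V) :
  \sum_(r : {ffun 'I_n -> option bool}) F #|support r| =
  \sum_(k < n.+1) F k *+ ('C(n, k) * 2 ^ k).
Proof.
rewrite (partition_big support predT) //=.
under eq_bigr => S _.
  rewrite (eq_bigr (fun=> F #|S|)); last by move=> r /eqP ->.
  rewrite sumr_const card_support_eq.
over.
rewrite (partition_big (fun S : {set 'I_n} => inord #|S| : 'I_n.+1) predT) //=.
apply: eq_bigr => k _.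
have sizeE (S : {set 'I_n}) : (inord #|S| == k :> 'I_n.+1) = (#|S| == k).
  rewrite -(inj_eq val_inj) /= inordK // ltnS.
  by rewrite -[X in (_ <= X)%N](card_ord n) max_card.
rewrite (eq_bigr (fun=> F k *+ 2 ^ k)); last by move=> S; rewrite sizeE => /eqP ->.
have -> : 'C(n, k) = #|[set S : {set 'I_n} | #|S| == k]| by rewrite card_draws card_ord.
rewrite sumr_const -mulrnA mulnC; congr (_ *+ (_ * _)).
by apply: eq_card => S; rewrite !inE -sizeE.
Qed.

End Faces.

Section Canalization.

Variable n : nat.
Implicit Types (f : boolfun n) (i : 'I_n) (s v : bool).

Definition canalizes f i s v := [forall x : input n, (x i == s) ==> (f x == v)].

Definition canalizing_to f v := [exists i, exists s, canalizes f i s v].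

Definition literal (ib : 'I_n * bool) : boolfun n := [ffun x : input n => x ib.1 == ib.2].

Lemma canalizingE f : canalizing f = canalizing_to f false || canalizing_to f true.
Proof.
apply/existsP/orP => [[i /existsP [s /existsP [[] fis]]] | ].
- by right; apply/existsP; exists i; apply/existsP; exists s.
- by left; apply/existsP; exists i; apply/existsP; exists s.
by case=> /existsP [i /existsP [s fis]]; exists i; apply/existsP; exists s;
  apply/existsP; [exists false | exists true].
Qed.

Lemma canalizes_false_true {f i s j t} :
  canalizes f i s false -> canalizes f j t true -> j = i /\ t = ~~ s.
Proof.
move=> /forallP f0 /forallP f1.
pose x : input n := [ffun k => if k == j then t else s].
have fx : f x by apply/eqP/(implyP (f1 x)); rewrite ffunE eqxx.
have xi_neq_s : x i != s by apply: contraTN fx => xis; rewrite (eqP (implyP (f0 x) xis)).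
move: xi_neq_s; rewrite ffunE; case: (eqVneq i j) => [<- ts|]; last by rewrite eqxx.
by split=> //; clear -ts; case: s t ts => -[].
Qed.

Lemma literal_inj : injective literal.
Proof.
move=> [i b] [j c] /ffunP /(_ [ffun k => if k == i then b else ~~ c]).
rewrite !ffunE /= eqxx; case: (eqVneq j i) => [->|_]; rewrite eqxx; last by case: c.
by move/esym/eqP ->.
Qed.

Lemma canalizing_to_both f :
  canalizing_to f false && canalizing_to f true = (f \in codom literal).
Proof.
apply/andP/codomP => [[/existsP [i /existsP [s f0]] /existsP [j /existsP [t f1]]] |
                       [[i b] ->]].
  have [ji ts] := canalizes_false_true f0 f1; subst j t.
  exists (i, ~~ s); apply/ffunP => x; rewrite ffunE /=.
  move: (forallP f0 x) (forallP f1 x); clear f0 f1.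
  by case: (x i) (f x) s => -[] -[].
split; apply/existsP; exists i; apply/existsP; [exists (~~ b) | exists b];
  by apply/forallP => x; rewrite ffunE /=; apply/implyP => /eqP ->; case: b.
Qed.

Lemma canalizes_const i s v v' : canalizes [ffun=> v] i s v' = (v == v').
Proof.
apply/forallP/eqP => [/(_ [ffun=> s]) | <- x]; last by rewrite ffunE eqxx implybT.
by rewrite !ffunE eqxx => /eqP.
Qed.

Lemma const_ffun_eq v v' : ([ffun=> v] == [ffun=> v'] :> boolfun n) = (v == v').
Proof.
by apply/eqP/eqP => [/ffunP /(_ [ffun=> false]) | ->]; rewrite ?ffunE.
Qed.

Lemma const_not_literal v : ([ffun=> v] \in codom literal) = false.
Proof.
apply/negbTE/codomP => -[[i b] /ffunP eq_lit].
move: (eq_lit [ffun=> b]) (eq_lit [ffun=> ~~ b]); rewrite !ffunE /= eqxx => ->.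
by clear eq_lit; case: b.
Qed.

Lemma canalizing_indicator (R : comNzRingType) f : (0 < n)%N ->
  ((canalizing f)%:R : R) =
    (-1) ^+ n * \sum_v (f == [ffun=> v])%:R
    - \sum_ib (f == literal ib)%:R
    + \sum_v (1 - \prod_i (1 - (canalizes f i false v)%:R - (canalizes f i true v)%:R)).
Proof.
move=> n_gt0; rewrite (sum_eq_inj _ literal_inj).
case: (boolP [exists v : bool, f == [ffun=> v]]) => [/existsP [v /eqP ->] | f_nonconst].
  have -> : canalizing ([ffun=> v] : boolfun n).
    apply/existsP; exists (Ordinal n_gt0); apply/existsP; exists false.
    apply/existsP; exists v.
    by rewrite -[X in is_true X]/(canalizes _ _ false v) canalizes_const.
  have prod_const v' : \prod_i (1 - (canalizes [ffun=> v] i false v')%:R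
      - (canalizes [ffun=> v] i true v')%:R) = if v == v' then (-1) ^+ n else 1 :> R.
    under eq_bigr do rewrite !canalizes_const.
    rewrite prodr_const card_ord.
    by case: (v == v') => /=; rewrite ?subrr ?sub0r ?subr0 ?expr1n.
  rewrite const_not_literal !big_bool /= !const_ffun_eq !prod_const.
  by case: v {prod_const} => /=; ring.
have disj v i : ~~ (canalizes f i false v && canalizes f i true v).
  apply/negP => /andP [/forallP f0 /forallP f1]; move/existsP: f_nonconst; apply.
  exists v; apply/eqP/ffunP => x; rewrite ffunE; apply/eqP.
  by case xi: (x i); [apply: (implyP (f1 x)) | apply: (implyP (f0 x))]; rewrite xi.
have prodE v : \prod_i (1 - (canalizes f i false v)%:R - (canalizes f i true v)%:R) =
    (~~ canalizing_to f v)%:R :> R.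
  rewrite prod_one_sub_indicators //; congr (~~ _)%:R; apply: eq_existsb => i.
  by apply/orP/existsP => [[] ci | [[] ci]]; by [exists false | exists true | right | left].
rewrite big1 => [|v _]; last first.
  by move: f_nonconst; rewrite negb_exists => /forallP/(_ v)/negbTE ->.
rewrite canalizingE -canalizing_to_both big_bool !prodE.
by case: (canalizing_to f false); case: (canalizing_to f true) => /=; ring.
Qed.

Lemma canalizes_faces f v (r : {ffun 'I_n -> option bool}) :
  [forall i, oapp (fun s => canalizes f i s v) true (r i)] =
  [forall x in faces r, f x == v].
Proof.
apply/forallP/forallP => [fr x | fr i].
  apply/implyP => /existsP [i /eqP ri].
  by move: (fr i); rewrite ri => /forallP/(_ x); rewrite eqxx.
case ri: (r i) => [s|] //; apply/forallP => x; apply/implyP => /eqP xi.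
by apply: (implyP (fr x)); apply/existsP; exists i; rewrite ri xi.
Qed.

Lemma prod_canalizesE (R : comNzRingType) f v :
  \prod_i (1 - (canalizes f i false v)%:R - (canalizes f i true v)%:R) =
  \sum_(r : {ffun 'I_n -> option bool})
     (-1) ^+ #|support r| * [forall x in faces r, f x == v]%:R :> R.
Proof.
pose G i (o : option bool) : R :=
  (-1) ^+ (o != None) * (oapp (fun s => canalizes f i s v) true o)%:R.
rewrite (eq_bigr (fun i => \sum_o G i o)); last first.
  by move=> i _; rewrite sum_option big_bool /G /= expr0 expr1 !mul1r !mulN1r; ring.
rewrite bigA_distr_bigA; apply: eq_bigr => r _.
rewrite big_split prodrXr prodr_natb canalizes_faces; congr (_ ^+ _ * _).
by rewrite -sum1_card [RHS]big_mkcond; apply: eq_bigr => i _; rewrite inE; case: (r i).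
Qed.

End Canalization.

Section BiasedExpectation.

Variables (R : comNzRingType) (p : R) (n : nat).
Implicit Types (f g : boolfun n) (X Y : boolfun n -> R).

Definition bias (b : bool) : R := if b then p else 1 - p.

Definition expect X := \sum_f prp p f * X f.

Lemma prpE f : prp p f = \prod_x bias (f x).
Proof.
rewrite /prp (bigID (fun x => f x)) /=.
rewrite (eq_bigr (fun=> p)) => [|x ->] //.
rewrite [X in _ = _ * X](eq_bigr (fun=> 1 - p)) => [|x /negbTE ->] //.
by rewrite !prodr_const !cardsE.
Qed.

Lemma expect_indicator (E : pred (boolfun n)) :
  expect (fun f => (E f)%:R) = \sum_(f | E f) prp p f.
Proof.
by rewrite [RHS]big_mkcond; apply: eq_bigr => f _; case: (E f); rewrite ?mulr1 ?mulr0.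
Qed.

Lemma eq_expect X Y : X =1 Y -> expect X = expect Y.
Proof. by move=> eqXY; apply: eq_bigr => f _; rewrite eqXY. Qed.

Lemma expectD X Y : expect (fun f => X f + Y f) = expect X + expect Y.
Proof. by rewrite -big_split; apply: eq_bigr => f _; rewrite mulrDr. Qed.

Lemma expectB X Y : expect (fun f => X f - Y f) = expect X - expect Y.
Proof. by rewrite -sumrB; apply: eq_bigr => f _; rewrite mulrBr. Qed.

Lemma expectZ c X : expect (fun f => c * X f) = c * expect X.
Proof. by rewrite mulr_sumr; apply: eq_bigr => f _; rewrite mulrCA. Qed.

Lemma expect_sum (I : finType) (X : I -> boolfun n -> R) :
  expect (fun f => \sum_i X i f) = \sum_i expect (X i).
Proof. by rewrite exchange_big; apply: eq_bigr => f _; rewrite mulr_sumr. Qed.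

Lemma sum_prp_forall (Q : input n -> pred bool) :
  \sum_(f : boolfun n | [forall x, Q x (f x)]) prp p f = \prod_x \sum_(b | Q x b) bias b.
Proof.
rewrite bigA_distr_big_dep; apply: eq_big => [f | f _]; last exact: prpE.
by apply/forallP/familyP.
Qed.

Lemma expect_constant_on (U : pred (input n)) v :
  expect (fun f => [forall x in U, f x == v]%:R) = bias v ^+ #|U|.
Proof.
rewrite expect_indicator (sum_prp_forall (fun x b => (x \in U) ==> (b == v))).
rewrite -prodr_const [RHS]big_mkcond; apply: eq_bigr => x _.
case: (x \in U) => /=; first exact: big_pred1_eq.
by rewrite big_bool /= addrC subrK.
Qed.

Lemma expect1 : expect (fun=> 1) = 1.
Proof.
rewrite -[RHS](expr0 (bias true)) -(card0 (input n)) -expect_constant_on.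
by apply: eq_expect => f; have -> : [forall x in pred0, f x == true] by apply/forall_inP.
Qed.

Lemma expect_eq g : expect (fun f => (f == g)%:R) = prp p g.
Proof. by rewrite expect_indicator big_pred1_eq. Qed.

Lemma prp_const v : prp p ([ffun=> v] : boolfun n) = bias v ^+ (2 ^ n).
Proof.
rewrite prpE (eq_bigr (fun=> bias v)) => [|x _]; last by rewrite ffunE.
by rewrite prodr_const card_ffun card_bool card_ord.
Qed.

Lemma prp_literal (ib : 'I_n * bool) :
  prp p (literal ib) = p ^+ (2 ^ n.-1) * (1 - p) ^+ (2 ^ n.-1).
Proof.
case: ib => i b; rewrite prpE (bigID (fun x : input n => x i == b)) /=.
rewrite (eq_bigr (fun=> p)) => [|x xi]; last by rewrite ffunE /= xi.
rewrite [X in _ * X](eq_bigr (fun=> 1 - p)) => [|x /negbTE xi]; last by rewrite ffunE /= xi.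
rewrite !prodr_const card_face; congr (_ * _ ^+ _).
rewrite -(card_face i (~~ b)); apply: eq_card => x.
by rewrite /in_mem /=; case: (x i); case: b.
Qed.

Lemma expect_prod_canalizes v :
  expect (fun f => \prod_i (1 - (canalizes f i false v)%:R - (canalizes f i true v)%:R)) =
  \sum_(k < n.+1) ((-1) ^+ k * bias v ^+ (2 ^ n - 2 ^ (n - k))) *+ ('C(n, k) * 2 ^ k).
Proof.
rewrite (eq_expect (fun f => prod_canalizesE R f v)) expect_sum.
rewrite -(sum_by_support n (fun k => (-1) ^+ k * bias v ^+ (2 ^ n - 2 ^ (n - k)))).
by apply: eq_bigr => r _; rewrite expectZ expect_constant_on card_faces.
Qed.

Lemma expect_one_sub_prod_canalizes v :
  expect (fun f => 1 - \prod_i (1 - (canalizes f i false v)%:R - (canalizes f i true v)%:R)) =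
  \sum_(1 <= k < n.+1) (-1) ^+ k.+1 * ('C(n, k) * 2 ^ k)%:R * bias v ^+ (2 ^ n - 2 ^ (n - k)).
Proof.
rewrite expectB expect1 expect_prod_canalizes big_ord_recl /= bin0 expn0 muln1 mulr1n.
rewrite expr0 !mul1r subn0 subnn expr0 opprD addrA subrr add0r -sumrN big_add1 big_mkord.
by apply: eq_bigr => k _; rewrite /bump add1n -mulr_natr !exprS; ring.
Qed.

End BiasedExpectation.

Theorem mainTheorem1 (R : realFieldType) (n : nat) (p : R) :
  (1 <= n)%N -> 0 <= p -> p <= 1 ->
  Pr_canal n p =
    (-1) ^+ n * (p ^+ (2 ^ n) + (1 - p) ^+ (2 ^ n))
    - (2 * n)%:R * p ^+ (2 ^ n.-1) * (1 - p) ^+ (2 ^ n.-1)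
    + \sum_(1 <= k < n.+1)
        (-1) ^+ k.+1 * ('C(n, k) * 2 ^ k)%:R
          * (p ^+ (2 ^ n - 2 ^ (n - k)) + (1 - p) ^+ (2 ^ n - 2 ^ (n - k))).
Proof.
move=> n_gt0 _ _.
rewrite [LHS](esym (expect_indicator p (@canalizing n))).
rewrite (eq_expect _ (canalizing_indicator R ^~ n_gt0)) expectD expectB expectZ !expect_sum.
under eq_bigr do rewrite expect_eq prp_const.
under [X in _ - X]eq_bigr do rewrite expect_eq prp_literal.
under [X in _ + X]eq_bigr do rewrite expect_one_sub_prod_canalizes.
rewrite big_bool sumr_const card_prod card_ord card_bool exchange_big /=.
congr (_ - _ + _); first by rewrite -mulrA mulr_natl mulnC.
by apply: eq_bigr => k _; rewrite big_bool /= -mulrDr.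
Qed.
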